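(* Let $K>0$, $K\neq 1$, and let \[ A_4=\begin{pmatrix} 1 & K & K\\ K & 1 & 1\\ K & 1 & 1\end{pmatrix}. \] Then \[ S(A_4)=\begin{pmatrix} a & b & b\\ b & c & c\\ b & c & c\end{pmatrix} \] with \[ a=\frac{-K^2-2+K\sqrt{K^2+8}}{2(K^2-1)},\qquad b=\frac{3K^2-K\sqrt{K^2+8}}{4(K^2-1)},\qquad c=\frac{K^2-4+K\sqrt{K^2+8}}{8(K^2-1)}, \] and \[ \lim_{K\to\infty}S(A_4)=\begin{pmatrix} 0 & 1/2 & 1/2\\ 1/2 & 1/4 & 1/4\\ 1/2 & 1/4 & 1/4\end{pmatrix}. \]
   Context: For a positive $n\times n$ matrix $A$, the Sinkhorn limit $S(A)$ is the unique doubly stochastic matrix of the form $XAY$ with $X,Y$ positive diagonal matrices; it is the limit of alternately row scaling (dividing each row by its row sum) and column scaling (dividing each column by its column sum) starting from $A$. For a positive symmetric matrix $A$ there is a unique positive diagonal $X$ with $S(A)=XAX$. *)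

From HB Require Import structures.
From mathcomp Require Import all_boot all_order all_algebra.
From mathcomp Require Import all_classical all_reals all_analysis.
Set Implicit Arguments. Unset Strict Implicit. Unset Printing Implicit Defensive.
Import Order.TTheory GRing.Theory Num.Theory.
Local Open Scope ring_scope.

Definition doubly_stochastic (R : realType) (n : nat) (M : 'M[R]_n) : Prop :=
  (forall i j, 0 <= M i j) /\
  (forall i, \sum_j M i j = 1) /\
  (forall j, \sum_i M i j = 1).

(* S is the Sinkhorn limit of A: S is doubly stochastic and S = X A Y
   with X, Y positive diagonal matrices. (The Sinkhorn limit of a positive
   matrix is the unique such S.) *)
Definition is_sinkhorn_limit (R : realType) (n : nat) (A S : 'M[R]_n) : Prop :=
  doubly_stochastic S /\
  exists x y : 'rV[R]_n,
    (forall i, 0 < x 0 i) /\ (forall i, 0 < y 0 i) /\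
    S = diag_mx x *m A *m diag_mx y.

Definition A4 (R : realType) (K : R) : 'M[R]_3 :=
  \matrix_(i < 3, j < 3)
    (if (i == 0 :> nat) && (j == 0 :> nat) then 1
     else if (i == 0 :> nat) || (j == 0 :> nat) then K else 1).

Definition abc_mx (R : realType) (a b c : R) : 'M[R]_3 :=
  \matrix_(i < 3, j < 3)
    (if (i == 0 :> nat) && (j == 0 :> nat) then a
     else if (i == 0 :> nat) || (j == 0 :> nat) then b else c).

Definition a_K (R : realType) (K : R) : R :=
  (- K ^+ 2 - 2 + K * Num.sqrt (K ^+ 2 + 8)) / (2 * (K ^+ 2 - 1)).
Definition b_K (R : realType) (K : R) : R :=
  (3 * K ^+ 2 - K * Num.sqrt (K ^+ 2 + 8)) / (4 * (K ^+ 2 - 1)).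
Definition c_K (R : realType) (K : R) : R :=
  (K ^+ 2 - 4 + K * Num.sqrt (K ^+ 2 + 8)) / (8 * (K ^+ 2 - 1)).

From HB Require Import structures.
From mathcomp Require Import all_boot all_order all_algebra.
From mathcomp Require Import all_classical all_reals all_analysis.
From mathcomp Require Import lra ring.
Set Implicit Arguments. Unset Strict Implicit. Unset Printing Implicit Defensive.
Import Order.TTheory GRing.Theory Num.Theory.
Import numFieldNormedType.Exports.
Local Open Scope ring_scope.

(** Equal rows (columns) of A force equal row (column) scalings in any
    doubly stochastic scaling X A Y, since all row sums are 1. Hence a
    doubly stochastic scaling of A4 has the pattern (a b b; b c c; b c c),
    with a + 2b = 1 = b + 2c from the line sums and K^2 a c = b^2 because
    S01 S10 / (S00 S11) = K^2 is invariant under diagonal scaling.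
    Eliminating a and c leaves K^2 (1 - 2b)(1 - b) = 2 b^2, whose only root
    in (0, 1/2) is b = 2K / (3K + sqrt (K^2 + 8)): this is b_K with its
    numerator rationalised, and it tends to 1/2 as K grows. *)

Section DiagonalScaling.
Variables (R : realType) (n : nat).
Implicit Types (A M : 'M[R]_n) (x y : 'rV[R]_n).

Lemma diag_scaledE x A y i j :
  (diag_mx x *m A *m diag_mx y) i j = x 0 i * A i j * y 0 j.
Proof. by rewrite mul_diag_mx mul_mx_diag !mxE. Qed.

Lemma trmx_diag_scaled x A y :
  (diag_mx x *m A *m diag_mx y)^T = diag_mx y *m A^T *m diag_mx x.
Proof. by rewrite !trmx_mul !tr_diag_mx mulmxA. Qed.

Lemma doubly_stochastic_trmx M : doubly_stochastic M -> doubly_stochastic M^T.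
Proof.
move=> [M_ge0 [rowM colM]]; split; [|split] => [i j|i|j]; rewrite ?mxE //;
  by under eq_bigr do rewrite mxE.
Qed.

Lemma row_sum_diag_scaled x A y i :
  \sum_j (diag_mx x *m A *m diag_mx y) i j = x 0 i * \sum_j A i j * y 0 j.
Proof. by rewrite mulr_sumr; apply: eq_bigr => j _; rewrite diag_scaledE mulrA. Qed.

Lemma scaling_eq_of_eq_rows x A y i k :
  doubly_stochastic (diag_mx x *m A *m diag_mx y) -> row i A = row k A ->
  x 0 i = x 0 k.
Proof.
move=> [_ [rowS _]] /rowP Aik.
have Aki j : A k j = A i j by have := Aik j; rewrite !mxE.
have := rowS k; rewrite row_sum_diag_scaled; under eq_bigr do rewrite Aki.
have := rowS i; rewrite row_sum_diag_scaled; set s := \sum_j _ => xi xk.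
have s_neq0 : s != 0 by apply/eqP => s0; move: xi; rewrite s0 mulr0; lra.
by apply: (mulIf s_neq0); rewrite xi xk.
Qed.

Lemma scaling_eq_of_eq_cols x A y j l :
  doubly_stochastic (diag_mx x *m A *m diag_mx y) -> col j A = col l A ->
  y 0 j = y 0 l.
Proof.
move=> /doubly_stochastic_trmx; rewrite trmx_diag_scaled => dsS Ajl.
by apply: scaling_eq_of_eq_rows dsS _; rewrite -!tr_col Ajl.
Qed.

End DiagonalScaling.

Section PatternMatrices.
Variable R : realType.
Implicit Types (a b c d p q r s K : R).

Lemma big_ord3 (F : 'I_3 -> R) : \sum_i F i = F 0 + F 1 + F 2.
Proof.
rewrite !big_ord_recl big_ord0 addr0 addrA.
by congr (F _ + F _ + F _); apply: val_inj.
Qed.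

Lemma ord3P (i : 'I_3) : [\/ i = 0, i = 1 | i = 2].
Proof.
by case: i => -[|[|[|?]]] // ?; [constructor 1|constructor 2|constructor 3]; apply: val_inj.
Qed.

Definition abb_rv p q : 'rV[R]_3 :=
  \row_(j < 3) (if j == 0 :> nat then p else q).

Definition abdc_mx a b d c : 'M[R]_3 :=
  \matrix_(i < 3, j < 3)
    (if (i == 0 :> nat) && (j == 0 :> nat) then a
     else if i == 0 :> nat then b else if j == 0 :> nat then d else c).

Lemma abc_mx_abdc a b c : abc_mx a b c = abdc_mx a b b c.
Proof.
apply/matrixP => i j; rewrite !mxE.
by case: (ord3P i) => ->; case: (ord3P j) => ->.
Qed.

Lemma A4_abc_mx K : A4 K = abc_mx 1 K 1.
Proof. by []. Qed.

Lemma abc_mx_row12 a b c : row 1 (abc_mx a b c) = row 2 (abc_mx a b c).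
Proof. by apply/rowP => j; rewrite !mxE; case: (ord3P j) => ->. Qed.

Lemma abc_mx_col12 a b c : col 1 (abc_mx a b c) = col 2 (abc_mx a b c).
Proof. by apply/colP => i; rewrite !mxE; case: (ord3P i) => ->. Qed.

Lemma abb_rvE (x : 'rV[R]_3) : x 0 1 = x 0 2 -> x = abb_rv (x 0 0) (x 0 1).
Proof.
by move=> x12; apply/rowP => j; rewrite mxE; case: (ord3P j) => ->.
Qed.

Lemma diag_scaled_abdc_mx p q r s a b d c :
  diag_mx (abb_rv p q) *m abdc_mx a b d c *m diag_mx (abb_rv r s) =
  abdc_mx (p * a * r) (p * b * s) (q * d * r) (q * c * s).
Proof.
apply/matrixP => i j; rewrite diag_scaledE !mxE.
by case: (ord3P i) => ->; case: (ord3P j) => ->.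
Qed.

Lemma doubly_stochastic_abdc_mx a b d c :
  doubly_stochastic (abdc_mx a b d c) -> d = b.
Proof.
move=> [_ [rows cols]]; have := rows 0; have := cols 0; have := rows 1; have := cols 1.
rewrite !big_ord3 !mxE /=; lra.
Qed.

Lemma doubly_stochastic_abc_mxP a b c :
  doubly_stochastic (abc_mx a b c) <->
  [/\ 0 <= a, 0 <= b, 0 <= c, a + 2 * b = 1 & b + 2 * c = 1].
Proof.
split=> [[ge0 [rows _]]|[a0 b0 c0 row0 row1]].
  have := ge0 0 0; have := ge0 0 1; have := ge0 1 1; have := rows 0; have := rows 1.
  by rewrite !big_ord3 !mxE /= => *; split; lra.
split; [|split] => [i j|i|j];
  [case: (ord3P i) => ->; case: (ord3P j) => ->|case: (ord3P i) => ->|case: (ord3P j) => ->];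
  rewrite ?big_ord3 !mxE /=; lra.
Qed.

End PatternMatrices.

Section Beta.
Variable R : realType.
Implicit Types (b K : R).

Definition beta K := 2 * K / (3 * K + Num.sqrt (K ^+ 2 + 8)).

Lemma sqrt_sqr_add8 K : Num.sqrt (K ^+ 2 + 8) ^+ 2 = K ^+ 2 + 8 /\ `|K| < Num.sqrt (K ^+ 2 + 8).
Proof.
have t2 : Num.sqrt (K ^+ 2 + 8) ^+ 2 = K ^+ 2 + 8 by rewrite sqr_sqrtr // addr_ge0 ?sqr_ge0.
split=> //; rewrite -sqrtr_sqr ltr_sqrt; have := sqr_ge0 K; lra.
Qed.

Lemma beta_rootP K b : 0 < K -> 0 < b < 2^-1 ->
  K ^+ 2 * ((1 - 2 * b) * (1 - b)) = 2 * b ^+ 2 <-> b = beta K.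
Proof.
move=> K0 /andP[b0 b1]; rewrite /beta.
have [] := sqrt_sqr_add8 K; rewrite gtr0_norm //; move: (Num.sqrt _) => t t2 Kt.
have t3K : 3 * K + t != 0 by rewrite gt_eqF //; lra.
have factor : (b * (3 * K + t) - 2 * K) * (b * (3 * K - t) - 2 * K) =
    4 * (K ^+ 2 * ((1 - 2 * b) * (1 - b)) - 2 * b ^+ 2).
  transitivity (4 * (K ^+ 2 * ((1 - 2 * b) * (1 - b)) - 2 * b ^+ 2) +
                b ^+ 2 * (K ^+ 2 + 8 - t ^+ 2)); first by ring.
  by rewrite t2 subrr mulr0 addr0.
have neg : b * (3 * K - t) - 2 * K < 0 by nra.
split=> [quad|hb].
  have /eqP : (b * (3 * K + t) - 2 * K) * (b * (3 * K - t) - 2 * K) = 0.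
    by rewrite factor quad subrr mulr0.
  rewrite mulf_eq0 (lt_eqF neg) orbF subr_eq0 => /eqP hb.
  by rewrite -hb mulfK.
have : 4 * (K ^+ 2 * ((1 - 2 * b) * (1 - b)) - 2 * b ^+ 2) = 0.
  by rewrite -factor hb divfK // subrr mul0r.
lra.
Qed.

Lemma beta_bounds K : 0 < K -> 0 < beta K < 2^-1.
Proof.
move=> K0; have [t2 Kt] := sqrt_sqr_add8 K; rewrite gtr0_norm // in Kt.
have t3K : 0 < 3 * K + Num.sqrt (K ^+ 2 + 8) by lra.
rewrite divr_gt0 ?mulr_gt0 //= ltr_pdivrMr //; lra.
Qed.

Lemma half_sub_beta_le K : 0 < K -> 2^-1 - beta K <= K^-1.
Proof.
move=> K0; have [t2 Kt] := sqrt_sqr_add8 K; rewrite gtr0_norm // in Kt.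
set t := Num.sqrt _ in t2 Kt.
have t3K : 0 < 3 * K + t by lra.
have e : (2^-1 - beta K) * K * (3 * K + t) = K * (t - K) / 2.
  by rewrite /beta -/t; field; rewrite gt_eqF.
have gap : K * (t - K) <= 4 by nra.
have t2_le : 2 <= t by nra.
rewrite -[K^-1]mul1r ler_pdivlMr //; move: e; move: ((2^-1 - beta K) * K) => x; nra.
Qed.

Lemma beta_cvg : (beta K @[K --> +oo] --> (2^-1 : R))%classic.
Proof.
have inv_cvg : ((fun K : R => K^-1) @ +oo --> (0 : R))%classic.
  by apply/(gtr0_cvgV0 (f := id)); [exact: nbhs_pinfty_gt | exact: cvg_id].
apply: (@squeeze_cvgr _ _ _ _ (fun K => 2^-1 - K^-1) (fun=> 2^-1)).
- near=> K; have K0 : 0 < K by near: K; exact: nbhs_pinfty_gt.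
  have := half_sub_beta_le K0; have /andP[_ beta_lt] := beta_bounds K0.
  by move=> ?; apply/andP; split; lra.
- by rewrite -[X in (_ --> X)%classic]subr0; apply: cvgB => //; exact: cvg_cst.
- exact: cvg_cst.
Unshelve. all: by end_near.
Qed.

End Beta.

Section SinkhornA4.
Variable R : realType.
Implicit Types (a b c K : R).

Definition A4_balanced K a b c :=
  [/\ 0 < a, 0 < b, a + 2 * b = 1, b + 2 * c = 1 & K ^+ 2 * (a * c) = b ^+ 2].

Lemma sinkhorn_limit_A4_balanced K (S : 'M[R]_3) : 0 < K ->
  is_sinkhorn_limit (A4 K) S -> exists a b c, S = abc_mx a b c /\ A4_balanced K a b c.
Proof.
move=> K_gt0 [dsS [x [y [x_gt0 [y_gt0 defS]]]]].
rewrite defS A4_abc_mx in dsS *.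
have x12 := scaling_eq_of_eq_rows dsS (abc_mx_row12 1 K 1).
have y12 := scaling_eq_of_eq_cols dsS (abc_mx_col12 1 K 1).
move: dsS (x_gt0 0) (x_gt0 1) (y_gt0 0) (y_gt0 1).
rewrite (abb_rvE x12) (abb_rvE y12) abc_mx_abdc diag_scaled_abdc_mx !mxE /= !mulr1.
move: (x 0 0) (x 0 1) (y 0 0) (y 0 1) => p q r s dsS p_gt0 q_gt0 r_gt0 s_gt0.
have sym := doubly_stochastic_abdc_mx dsS; rewrite sym -abc_mx_abdc in dsS *.
have [_ _ _ row0 row1] := (doubly_stochastic_abc_mxP _ _ _).1 dsS.
exists (p * r), (p * K * s), (q * s); split=> //; split=> //.
- by rewrite mulr_gt0.
- by rewrite !mulr_gt0.
- by rewrite [RHS]expr2 -{1}sym; ring.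
Qed.

Lemma sinkhorn_limit_A4_abc_mx K a b c : 0 < K ->
  A4_balanced K a b c -> is_sinkhorn_limit (A4 K) (abc_mx a b c).
Proof.
move=> K_gt0 [a_gt0 b_gt0 row0 row1 cross].
have K0 : K != 0 by rewrite gt_eqF.
have a0 : a != 0 by rewrite gt_eqF.
split; first by apply/doubly_stochastic_abc_mxP; split; lra.
(* X, Y are only determined up to (X, Y) |-> (t X, Y / t); take y_0 = 1. *)
exists (abb_rv a (b / K)), (abb_rv 1 (b / (K * a))).
split; [|split] => [i|i|].
- by rewrite mxE; case: ifP => _; rewrite ?divr_gt0.
- by rewrite mxE; case: ifP => _; rewrite ?divr_gt0 ?mulr_gt0.
rewrite A4_abc_mx !abc_mx_abdc diag_scaled_abdc_mx; congr abdc_mx; rewrite ?mulr1 //.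
- by field; rewrite a0 K0.
- by rewrite divfK.
- rewrite -[LHS](mulKf (mulf_neq0 (expf_neq0 2 K0) a0)) -[K ^+ 2 * a * c]mulrA cross.
  by field; rewrite K0 a0.
Qed.

Lemma A4_balanced_beta K a b c : 0 < K ->
  A4_balanced K a b c <-> [/\ a = 1 - 2 * beta K, b = beta K & c = (1 - beta K) / 2].
Proof.
move=> K_gt0; split=> [[a_gt0 b_gt0 row0 row1 cross]|[-> -> ->]].
  have b_lt : b < 2^-1 by lra.
  have a_eq : a = 1 - 2 * b by lra.
  have c_eq : c = (1 - b) / 2 by lra.
  suff b_eq : b = beta K by rewrite a_eq c_eq b_eq.
  apply/beta_rootP; rewrite ?b_gt0 ?b_lt //.
  by rewrite -cross a_eq c_eq; field.
have quad := (beta_rootP K_gt0 (beta_bounds K_gt0)).2 erefl.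
have /andP[beta_gt0 beta_lt] := beta_bounds K_gt0.
by split; lra.
Qed.

Lemma sinkhorn_limit_A4_beta K (S : 'M[R]_3) : 0 < K ->
  is_sinkhorn_limit (A4 K) S <-> S = abc_mx (1 - 2 * beta K) (beta K) ((1 - beta K) / 2).
Proof.
move=> K_gt0; split=> [/(sinkhorn_limit_A4_balanced K_gt0)[a [b [c [-> ]]]]|->].
  by case/(A4_balanced_beta _ _ _ K_gt0) => -> -> ->.
by apply: sinkhorn_limit_A4_abc_mx => //; apply/A4_balanced_beta.
Qed.

Lemma abc_mx_K_beta K : 0 < K -> K != 1 ->
  abc_mx (a_K K) (b_K K) (c_K K) = abc_mx (1 - 2 * beta K) (beta K) ((1 - beta K) / 2).
Proof.
move=> K_gt0 K_neq1.
have K21 : K ^+ 2 - 1 != 0.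
  by rewrite -(expr1n R 2) subr_sqr mulf_neq0 ?subr_eq0 // gt_eqF //; lra.
have bK : b_K K = beta K.
  rewrite /b_K /beta; have [] := sqrt_sqr_add8 K; rewrite gtr0_norm //.
  move: (Num.sqrt _) => t t2 Kt; apply/eqP; rewrite eqr_div ?mulf_neq0 //; last first.
    by rewrite gt_eqF //; lra.
  apply/eqP; transitivity (K * (9 * K ^+ 2 - t ^+ 2)); first by ring.
  by rewrite t2; ring.
by rewrite -bK /a_K /b_K /c_K; congr abc_mx; field.
Qed.

Lemma abc_mx_affine b :
  abc_mx (1 - 2 * b) b ((1 - b) / 2) = abc_mx 1 0 2^-1 + b *: abc_mx (-2) 1 (- 2^-1).
Proof.
apply/matrixP => i j; rewrite !mxE.
by case: (_ && _); last case: (_ || _); field.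
Qed.

Lemma cvg_abc_mx_affine T (F : set_system T) {FF : Filter F} (g : T -> R) (l : R) :
  (g @ F --> l)%classic ->
  (abc_mx (1 - 2 * g x) (g x) ((1 - g x) / 2) @[x --> F] -->
   abc_mx (1 - 2 * l) l ((1 - l) / 2))%classic.
Proof.
move=> gl; under eq_fun do rewrite abc_mx_affine; rewrite abc_mx_affine.
by apply: cvgD; [exact: cvg_cst | apply: cvgZ gl _; exact: cvg_cst].
Qed.

End SinkhornA4.

Theorem mainTheorem9 (R : realType) :
  (forall K : R, 0 < K -> K != 1 ->
     forall S : 'M[R]_3,
       is_sinkhorn_limit (A4 K) S <-> S = abc_mx (a_K K) (b_K K) (c_K K)) /\
  (forall f : R -> 'M[R]_3,
     (forall K : R, 1 < K -> is_sinkhorn_limit (A4 K) (f K)) ->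
     (f K @[K --> +oo] --> abc_mx 0 (2^-1) (4^-1))%classic).
Proof.
split=> [K K_gt0 K_neq1 S|f sinkf].
  by rewrite sinkhorn_limit_A4_beta // abc_mx_K_beta.
have -> : abc_mx 0 2^-1 4^-1 = abc_mx (1 - 2 * 2^-1) 2^-1 ((1 - 2^-1) / 2) :> 'M[R]_3.
  by congr abc_mx; field.
apply: cvg_trans (cvg_abc_mx_affine (@beta_cvg R)); apply: near_eq_cvg; near=> K.
have K_gt1 : 1 < K by near: K; exact: nbhs_pinfty_gt.
by apply/esym/sinkhorn_limit_A4_beta; [lra | exact: sinkf].
Unshelve. all: by end_near.
Qed.
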